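(* Let $\alpha\approx1.46557$ be the real root of $x^3-x^2-1$ between $1$ and $2$. Every forest of order $n$ has at most $\alpha^n$ induced matchings, and the number of induced matchings of the path on $n$ vertices is $\Theta(\alpha^n)$.
   Context: An induced matching of a graph $G=(V,E)$ is here a set $D\subseteq V$ such that every vertex of $D$ has exactly one neighbour in $D$ (a $(\{1\},\mathbb{N})$-dominating set); the empty set counts. Order = number of vertices. *)

From HB Require Import structures.
From mathcomp Require Import all_boot all_order all_algebra.
Set Implicit Arguments. Unset Strict Implicit. Unset Printing Implicit Defensive.

Definition simple_graph (T : finType) (e : rel T) : Prop :=
  symmetric e /\ irreflexive e.

Definition has_cycle (T : finType) (e : rel T) : Prop :=
  exists s : seq T, [/\ 3 <= size s, uniq s & cycle e s].

Definition forest (T : finType) (e : rel T) : Prop :=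
  simple_graph e /\ ~ has_cycle e.

(* D is an induced matching ({1},N)-dominating set: every vertex of D
   has exactly one neighbour in D. The empty set qualifies. *)
Definition induced_matching (T : finType) (e : rel T) (D : {set T}) : bool :=
  [forall v in D, #|[set u in D | e v u]| == 1].

Definition num_induced_matchings (T : finType) (e : rel T) : nat :=
  #|[set D : {set T} | induced_matching e D]|.

Definition path_rel (n : nat) : rel 'I_n :=
  fun i j => (i.+1 == j :> nat) || (j.+1 == i :> nat).

(* We count
   the induced matchings contained in a vertex set S, and establish two
   reduction rules:
   - an isolated vertex of S lies in no induced matching inside S;
   - if v is a pendant vertex of S with neighbour u, then
       #M(S) = #M(S - v) + #M(S - N[u]),
     since a matching containing v must match it with u and avoid the
     other neighbours of u.
   An acyclic graph always has a vertex of degree at most one in S (the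
   first vertex of a non-extendable path), so strong induction on #|S| with
   the identities alpha^(k+3) = alpha^(k+2) + alpha^k and
   2 alpha^k <= alpha^(k+2) gives #M(S) <= alpha^#|S| for every forest.
   For the path P_n the same rules yield the recurrence
   c(k+3) = c(k+2) + c(k), whence alpha^(n-2) <= c(n) <= alpha^n. *)

From HB Require Import structures.
From mathcomp Require Import all_boot all_order all_algebra.
Import Order.TTheory GRing.Theory Num.Theory.
From mathcomp Require Import zify lra.
Set Implicit Arguments. Unset Strict Implicit. Unset Printing Implicit Defensive.

Section InducedMatchings.

Variables (T : finType) (e : rel T).
Hypotheses (e_sym : symmetric e) (e_irr : irreflexive e).

Definition nbrs (D : {set T}) (x : T) : {set T} := [set y in D | e x y].

Definition cnbhd (u : T) : {set T} := u |: [set w | e u w].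

Definition matchings_in (S : {set T}) : {set {set T}} :=
  [set D : {set T} | (D \subset S) && induced_matching e D].

Lemma induced_matchingP (D : {set T}) :
  reflect (forall x, x \in D -> #|nbrs D x| = 1) (induced_matching e D).
Proof.
apply: (iffP forallP) => [H x xD | H x]; first by move: (H x); rewrite xD => /eqP.
by apply/implyP => xD; rewrite H.
Qed.

Lemma num_induced_matchingsE : num_induced_matchings e = #|matchings_in setT|.
Proof. by apply: eq_card => D; rewrite !inE subsetT. Qed.

Lemma card_matchings_in0 : #|matchings_in set0| = 1%N.
Proof.
apply/eqP/cards1P; exists set0; apply/setP => D; rewrite !inE subset0.
by case: eqP => // -> /=; apply/induced_matchingP => x; rewrite inE.
Qed.

Lemma card_matchings_in_mono (S1 S2 : {set T}) :
  S1 \subset S2 -> (#|matchings_in S1| <= #|matchings_in S2|)%N.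
Proof.
move=> S12; apply/subset_leq_card/subsetP => D; rewrite !inE => /andP [DS ->].
by rewrite (subset_trans DS S12).
Qed.

Lemma induced_matchingU (A B : {set T}) :
  (forall a b, a \in A -> b \in B -> ~~ e a b) ->
  induced_matching e (A :|: B) = induced_matching e A && induced_matching e B.
Proof.
move=> noAB.
have nbrsUA x : x \in A -> nbrs (A :|: B) x = nbrs A x.
  move=> xA; apply/setP => y; rewrite !inE andb_orl.
  by case: (boolP (y \in B)) => yB; rewrite ?orbF // (negbTE (noAB _ _ xA yB)) orbF.
have nbrsUB x : x \in B -> nbrs (A :|: B) x = nbrs B x.
  move=> xB; apply/setP => y; rewrite !inE andb_orl.
  by case: (boolP (y \in A)) => yA; rewrite // e_sym (negbTE (noAB _ _ yA xB)).
apply/induced_matchingP/andP => [H | [/induced_matchingP HA /induced_matchingP HB] x].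
  split; apply/induced_matchingP => x xD.
  - by rewrite -nbrsUA // H // inE xD.
  - by rewrite -nbrsUB // H // inE xD orbT.
by rewrite inE => /orP [xA | xB]; [rewrite nbrsUA ?HA | rewrite nbrsUB ?HB].
Qed.

Lemma matchings_in_isolated (S : {set T}) (v : T) :
  nbrs S v = set0 -> matchings_in S = matchings_in (S :\ v).
Proof.
move=> v_iso; apply/setP => D; rewrite !inE subsetD1 -andbA.
case: (boolP (D \subset S)) => //= DS; case: (boolP (v \in D)) => //= vD.
apply/negP => /induced_matchingP/(_ v vD).
suff -> : nbrs D v = set0 by rewrite cards0.
apply/eqP; rewrite -subset0 -v_iso; apply/subsetP => y.
by rewrite !inE => /andP [/(subsetP DS) -> ->].
Qed.

Section Pendant.

Variables (S : {set T}) (u v : T).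
Hypotheses (vS : v \in S) (v_pendant : nbrs S v = [set u]).

Lemma pendant_edge : [/\ u \in S, e v u, e u v & u != v].
Proof.
have : u \in nbrs S v by rewrite v_pendant set11.
rewrite inE => /andP [uS evu]; split => //; first by rewrite e_sym.
by apply: contraTneq evu => ->; rewrite e_irr.
Qed.

Lemma pendant_separated (x y : T) :
  x \in S :\: cnbhd u -> y \in [set u; v] -> ~~ e x y.
Proof.
rewrite !inE negb_or => /andP [/andP [xu eux] xS] /orP [] /eqP ->; first by rewrite e_sym.
have : (x \in nbrs S v) = (x == u) by rewrite v_pendant inE.
by rewrite inE xS /= (negbTE xu) e_sym => ->.
Qed.

Lemma pair_induced_matching : induced_matching e [set u; v].
Proof.
have [_ evu euv uv] := pendant_edge.
apply/induced_matchingP => x; rewrite !inE => /orP [] /eqP -> {x};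
  apply/eqP/cards1P; [exists v | exists u]; apply/setP => y; rewrite !inE.
- by case: (eqVneq y u) => [->|_]; rewrite ?e_irr ?(negbTE uv) //; case: eqP => // ->.
- by case: (eqVneq y u) => [->|_]; rewrite ?evu //; case: eqP => // ->; rewrite e_irr.
Qed.

Lemma matchings_in_pendant :
  [set D in matchings_in S | v \in D] =
  [set D :|: [set u; v] | D in matchings_in (S :\: cnbhd u)].
Proof.
have [uS evu euv uv] := pendant_edge.
have sepU (D : {set T}) : D \subset S :\: cnbhd u ->
    induced_matching e (D :|: [set u; v]) = induced_matching e D.
  move=> DS; rewrite induced_matchingU ?pair_induced_matching ?andbT //.
  by move=> x y /(subsetP DS); apply: pendant_separated.
apply/setP => D; rewrite !inE; apply/idP/imsetP.
- case/andP => /andP [DS /induced_matchingP D_im] vD.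
  have nbrsDv : nbrs D v = [set u].
    apply/eqP; rewrite eqEcard D_im // cards1 andbT -v_pendant.
    by apply/subsetP => y; rewrite !inE => /andP [/(subsetP DS) -> ->].
  have uD : u \in D by have := set11 u; rewrite -nbrsDv inE => /andP [].
  have nbrsDu : nbrs D u = [set v].
    apply/eqP; rewrite eq_sym eqEcard D_im // cards1 leqnn andbT sub1set.
    by rewrite inE vD euv.
  have D'S : D :\: [set u; v] \subset S :\: cnbhd u.
    apply/subsetP => x; rewrite !inE !negb_or => /andP [/andP [xu xv] xD].
    rewrite xu (subsetP DS) // andbT; apply: contra xv => eux.
    by rewrite -in_set1 -nbrsDu inE xD.
  have DE : D :\: [set u; v] :|: [set u; v] = D.
    by rewrite setUC -{2}(setID D [set u; v]) (setIidPr _) // subUset !sub1set uD vD.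
  exists (D :\: [set u; v]); last by rewrite DE.
  by rewrite inE D'S -sepU // DE; apply/induced_matchingP.
- case=> D' /[!inE] /andP [D'S D'_im] ->.
  rewrite sepU // D'_im !inE eqxx !orbT !andbT subUset subUset !sub1set uS vS !andbT.
  by apply: subset_trans D'S (subsetDl _ _).
Qed.

(* Hence the pendant recurrence: either v is unmatched, or vu is a matched
   edge and the rest of the matching avoids the closed neighbourhood of u. *)
Lemma card_matchings_in_pendant :
  #|matchings_in S| = (#|matchings_in (S :\ v)| + #|matchings_in (S :\: cnbhd u)|)%N.
Proof.
rewrite -(cardsID [set D : {set T} | v \in D] (matchings_in S)) addnC; congr (_ + _)%N.
  apply: eq_card => D; rewrite !inE subsetD1.
  by rewrite andbCA andbA.
rewrite -setIdE matchings_in_pendant card_in_imset //.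
move=> D1 D2 /[!inE] /andP [S1 _] /andP [S2 _].
have avoid (D : {set T}) : D \subset S :\: cnbhd u -> [disjoint D & [set u; v]].
  have [_ _ euv _] := pendant_edge.
  move=> DS; apply/pred0P => x /=; apply/negP => /andP [/(subsetP DS)].
  rewrite !inE negb_or => /andP [/andP [xu eux] _].
  by rewrite (negbTE xu) /= => /eqP xv; move: eux; rewrite xv euv.
move/(congr1 (fun X => X :\: [set u; v])) => /=.
rewrite !(setDUl _ [set u; v]) setDv !setU0.
by rewrite (setDidPl (avoid _ S1)) (setDidPl (avoid _ S2)).
Qed.

End Pendant.

End InducedMatchings.

Section Acyclic.

Variables (T : finType) (e : rel T).
Hypotheses (e_sym : symmetric e) (e_irr : irreflexive e).

Lemma path_chord_cycle (x z y : T) (s : seq T) :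
  uniq [:: x, z & s] -> path e x (z :: s) -> y \in s -> e x y -> has_cycle e.
Proof.
move=> s_uniq s_path ys exy; case/splitPr: ys s_uniq s_path => s1 s2 s_uniq s_path.
exists (x :: z :: rcons s1 y); split.
- by rewrite /= size_rcons.
- move: s_uniq; rewrite -cat_rcons -[x :: z :: _ ++ _]/((x :: z :: rcons s1 y) ++ s2).
  by rewrite cat_uniq => /andP [].
- rewrite /= rcons_path last_rcons (e_sym y x) exy andbT.
  by move: s_path; rewrite /= -cat_rcons cat_path => /and3P [-> ->].
Qed.

Lemma maximal_path_in (S : {set T}) (x0 : T) : x0 \in S ->
  exists x s, [/\ uniq (x :: s), all (mem S) (x :: s), path e x s &
    forall y, y \in S -> e y x -> y \in x :: s].
Proof.
move=> x0S.
pose ok (t : seq T) := [&& uniq t, all (mem S) t & sorted e t].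
pose P k := [exists t : k.-tuple T, ok t].
have P1 : P 1%N by apply/existsP; exists [tuple x0]; rewrite /ok /= x0S.
have P_bound k : P k -> (k <= #|T|)%N.
  case/existsP => t /and3P [t_uniq _ _].
  by rewrite -(size_tuple t) -(card_uniqP t_uniq) max_card.
case: (ex_maxnP (ex_intro _ 1%N P1) P_bound) => m /existsP [[[|x s] /= m_size]] //.
  by move=> _ /(_ 1%N P1); rewrite -(eqP m_size).
case/and3P => s_uniq s_in s_path m_max; exists x, s; split=> // y yS eyx.
apply/negPn/negP => y_new.
have : P m.+1.
  apply/existsP; exists (@Tuple m.+1 _ (y :: x :: s) (m_size : size (y :: x :: s) == m.+1)).
  by move: s_uniq s_in s_path; rewrite /ok /= y_new yS eyx => -> -> ->.
by move/m_max; rewrite ltnn.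
Qed.

Lemma low_degree_vertex (S : {set T}) : ~ has_cycle e -> S != set0 ->
  exists2 v, v \in S & (#|nbrs e S v| <= 1)%N.
Proof.
move=> acyclic /set0Pn [x0 x0S].
have [x [s [s_uniq /andP [xS _] s_path s_max]]] := maximal_path_in x0S.
exists x => //; case: s s_uniq s_path s_max => [|z s] s_uniq s_path s_max.
  rewrite leqW // leqn0 cards_eq0; apply/eqP/setP => y; rewrite !inE.
  apply/negP => /andP [yS exy].
  move: (s_max y yS); rewrite e_sym exy inE => /(_ isT) /eqP eyx.
  by rewrite eyx e_irr in exy.
rewrite -(cards1 z); apply/subset_leq_card/subsetP => y; rewrite !inE => /andP [yS exy].
move: (s_max y yS); rewrite e_sym exy !inE => /(_ isT) /or3P [/eqP eyx | // | ys].
  by rewrite eyx e_irr in exy.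
by case: acyclic; apply: path_chord_cycle s_uniq s_path ys exy.
Qed.

End Acyclic.

Section SupergoldenRatio.

Local Open Scope ring_scope.

Variables (R : realFieldType) (alpha : R).
Hypotheses (alpha_gt1 : 1 < alpha) (alpha_root : alpha ^+ 3 = alpha ^+ 2 + 1).

Lemma alpha_gt0 : 0 < alpha.
Proof. exact: lt_trans alpha_gt1. Qed.

Lemma alpha_exp_rec (n : nat) : alpha ^+ n.+3 = alpha ^+ n.+2 + alpha ^+ n.
Proof. by rewrite -[n.+3]addn3 -[n.+2]addn2 !exprD alpha_root mulrDr mulr1. Qed.

Lemma alpha_exp_mono (m n : nat) : (m <= n)%N -> alpha ^+ m <= alpha ^+ n.
Proof. by move=> mn; apply: ler_weXn2l => //; apply: ltW. Qed.

(* alpha^2 (alpha - 1) = 1 forces alpha^2 >= 2. *)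
Lemma alpha_sqr_ge2 : 2 <= alpha ^+ 2.
Proof.
have : alpha * alpha ^+ 2 = alpha ^+ 2 + 1 by rewrite -exprS.
rewrite expr2 => alpha_cube; have := alpha_gt1; nra.
Qed.

Lemma alpha_exp_double (n : nat) : alpha ^+ n + alpha ^+ n <= alpha ^+ n.+2.
Proof.
rewrite -addn2 exprD -mulr2n -mulr_natr ler_wpM2l ?alpha_sqr_ge2 //.
by rewrite exprn_ge0 // ltW // alpha_gt0.
Qed.

End SupergoldenRatio.

Section ForestBound.

Local Open Scope ring_scope.

Variables (R : realFieldType) (alpha : R).
Hypotheses (alpha_gt1 : 1 < alpha) (alpha_root : alpha ^+ 3 = alpha ^+ 2 + 1).
Variables (T : finType) (e : rel T).
Hypotheses (e_sym : symmetric e) (e_irr : irreflexive e).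

Definition bounded (S : {set T}) : bool :=
  (#|matchings_in e S|)%:R <= alpha ^+ #|S|.

Lemma card_matchings_in_ler (S1 S2 : {set T}) : S1 \subset S2 ->
  (#|matchings_in e S1|)%:R <= (#|matchings_in e S2|)%:R :> R.
Proof. by move=> S12; rewrite ler_nat card_matchings_in_mono. Qed.

Lemma bounded_isolated (S : {set T}) (v : T) :
  v \in S -> nbrs e S v = set0 -> bounded (S :\ v) -> bounded S.
Proof.
move=> vS v_iso; rewrite /bounded (matchings_in_isolated v_iso) => /le_trans; apply.
by apply: (alpha_exp_mono alpha_gt1); rewrite (cardsD1 v S) vS.
Qed.

(* A pendant edge vu where u has no further neighbour: both terms of the
   pendant recurrence are bounded by the count for S minus u and v. *)
Lemma bounded_pendant_edge (S : {set T}) (u v : T) :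
  v \in S -> nbrs e S v = [set u] -> nbrs e (S :\ v) u = set0 ->
  bounded (S :\ v :\ u) -> bounded S.
Proof.
move=> vS v_pendant u_iso bound_Svu.
have [uS _ euv uv] := pendant_edge e_sym e_irr v_pendant.
have cardS : #|S| = (#|S :\ v :\ u|).+2.
  by rewrite (cardsD1 v S) vS (cardsD1 u (S :\ v)) !inE uS uv.
have sub : S :\: cnbhd e u \subset S :\ v :\ u.
  apply/subsetP => x; rewrite !inE negb_or => /andP [/andP [xu eux] ->].
  by rewrite xu andbT; apply: contraNneq eux => ->.
rewrite /bounded (card_matchings_in_pendant e_sym e_irr vS v_pendant) natrD.
rewrite (matchings_in_isolated u_iso) cardS; apply: le_trans (alpha_exp_double _ _ _) => //.
by apply: lerD => //; apply: le_trans (card_matchings_in_ler sub) bound_Svu.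
Qed.

(* A pendant edge vu where u has a further neighbour w: the recurrence
   alpha^(k+3) = alpha^(k+2) + alpha^k absorbs the two terms. *)
Lemma bounded_pendant_path (S : {set T}) (u v w : T) :
  v \in S -> nbrs e S v = [set u] -> w \in nbrs e (S :\ v) u ->
  bounded (S :\ v) -> bounded (S :\ v :\ u :\ w) -> bounded S.
Proof.
move=> vS v_pendant uw bound_Sv bound_Svuw.
have [uS _ euv uv] := pendant_edge e_sym e_irr v_pendant.
move: uw; rewrite !inE => /andP [/andP [wv wS] euw].
have wu : w != u by apply: contraTneq euw => ->; rewrite e_irr.
have cardSv : #|S :\ v| = (#|S :\ v :\ u :\ w|).+2.
  by rewrite (cardsD1 u (S :\ v)) (cardsD1 w (S :\ v :\ u)) !inE uS uv wu wv wS.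
have cardS : #|S| = (#|S :\ v :\ u :\ w|).+3 by rewrite (cardsD1 v S) vS cardSv.
have sub : S :\: cnbhd e u \subset S :\ v :\ u :\ w.
  apply/subsetP => x; rewrite !inE negb_or => /andP [/andP [xu eux] ->].
  rewrite xu !andbT; apply/andP; split; apply: contraNneq eux => -> //.
rewrite /bounded (card_matchings_in_pendant e_sym e_irr vS v_pendant) natrD.
rewrite cardS alpha_exp_rec // -cardSv; apply: lerD => //.
exact: le_trans (card_matchings_in_ler sub) bound_Svuw.
Qed.

Theorem bounded_acyclic (S : {set T}) : ~ has_cycle e -> bounded S.
Proof.
move=> acyclic; have [n] := ubnP #|S|; elim: n S => // n IH S; rewrite ltnS => Sn.
have IHD1 (x : T) (X : {set T}) : x \in X -> (#|X| <= n)%N -> bounded (X :\ x).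
  by move=> xX Xn; apply: IH; rewrite (cardsD1 x X) xX in Xn.
have [->|S_nonempty] := eqVneq S set0.
  by rewrite /bounded card_matchings_in0 cards0 expr0.
have [v vS] := low_degree_vertex e_sym e_irr acyclic S_nonempty.
rewrite leq_eqVlt ltnS leqn0 cards_eq0 => /orP [/cards1P [u v_pendant] | /eqP v_iso].
  have [uS _ _ uv] := pendant_edge e_sym e_irr v_pendant.
  have Svn : (#|S :\ v| <= n)%N by apply: leq_trans Sn; rewrite subset_leq_card ?subsetDl.
  have uSv : u \in S :\ v by rewrite !inE uv.
  have [u_iso | /set0Pn [w uw]] := eqVneq (nbrs e (S :\ v) u) set0.
    exact: bounded_pendant_edge vS v_pendant u_iso (IHD1 _ _ uSv Svn).
  apply: (bounded_pendant_path vS v_pendant uw); first exact: IHD1.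
  have wSvu : w \in S :\ v :\ u.
    move: uw; rewrite !inE => /andP [/andP [-> ->] euw]; rewrite !andbT.
    by apply: contraTneq euw => ->; rewrite e_irr.
  by apply: IHD1 wSvu _; apply: leq_trans Svn; rewrite subset_leq_card ?subsetDl.
exact: bounded_isolated vS v_iso (IHD1 _ _ vS Sn).
Qed.

End ForestBound.

Fixpoint path_count (n : nat) : nat :=
  match n with
  | 0 | 1 => 1
  | 2 => 2
  | (k.+2 as m).+1 => path_count m + path_count k
  end.

Lemma path_countSS (j : nat) : path_count j.+2 = (path_count j.+1 + path_count j.-1)%N.
Proof. by case: j. Qed.

Lemma path_rel_sym (n : nat) : symmetric (@path_rel n).
Proof. by move=> i j; rewrite /path_rel orbC. Qed.

Lemma path_rel_irr (n : nat) : irreflexive (@path_rel n).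
Proof. by move=> i; apply/negbTE; rewrite /path_rel; lia. Qed.

(* Inside the first k vertices of the path, the last vertex is pendant (or
   isolated when k = 1), so the pendant recurrence yields path_count k. *)
Lemma card_matchings_in_prefix (n k : nat) : (k <= n)%N ->
  #|matchings_in (@path_rel n) [set i : 'I_n | i < k]| = path_count k.
Proof.
elim/ltn_ind: k => -[|[|j]] IH kn.
- have -> : [set i : 'I_n | i < 0] = set0 by apply/setP => i; rewrite !inE.
  exact: card_matchings_in0.
- rewrite (@matchings_in_isolated _ _ _ (Ordinal kn)); last first.
    by apply/setP => i; rewrite !inE /path_rel /=; lia.
  have -> : [set i : 'I_n | i < 1] :\ Ordinal kn = set0.
    by apply/setP => i; rewrite !inE -val_eqE /=; lia.
  exact: card_matchings_in0.
- have vn : (j.+1 < n)%N by lia.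
  have un : (j < n)%N by lia.
  have v_pendant : nbrs (@path_rel n) [set i : 'I_n | i < j.+2] (Ordinal vn) = [set Ordinal un].
    by apply/setP => i; rewrite !inE /path_rel -val_eqE /=; lia.
  rewrite (card_matchings_in_pendant (@path_rel_sym n) (@path_rel_irr n) _ v_pendant) ?inE //.
  have -> : [set i : 'I_n | i < j.+2] :\ Ordinal vn = [set i : 'I_n | i < j.+1].
    by apply/setP => i; rewrite !inE -val_eqE /=; lia.
  have -> : [set i : 'I_n | i < j.+2] :\: cnbhd (@path_rel n) (Ordinal un) =
            [set i : 'I_n | i < j.-1].
    by apply/setP => i; rewrite !inE /path_rel -val_eqE /=; lia.
  by rewrite path_countSS !IH //; lia.
Qed.

Lemma num_induced_matchings_path (n : nat) :
  num_induced_matchings (@path_rel n) = path_count n.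
Proof.
rewrite num_induced_matchingsE -(@card_matchings_in_prefix n n) //.
by congr #|matchings_in _ _|; apply/setP => i; rewrite !inE ltn_ord.
Qed.

Section PathGrowth.

Local Open Scope ring_scope.

Variables (R : realFieldType) (alpha : R).
Hypotheses (alpha_gt1 : 1 < alpha) (alpha_root : alpha ^+ 3 = alpha ^+ 2 + 1).

(* Both sequences obey the same recurrence, so comparing the first three
   terms suffices: alpha^n / alpha^2 <= path_count n <= alpha^n. *)
Lemma path_count_le (n : nat) : (path_count n)%:R <= alpha ^+ n.
Proof.
elim/ltn_ind: n => -[|[|[|j]]] IH.
- by rewrite expr0.
- by rewrite expr1 ltW.
- exact: alpha_sqr_ge2.
- rewrite path_countSS natrD alpha_exp_rec //; apply: lerD; apply: IH; lia.
Qed.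

Lemma path_count_ge (n : nat) : alpha ^+ n <= alpha ^+ 2 * (path_count n)%:R.
Proof.
have alpha_ge0 : 0 <= alpha by rewrite ltW // (alpha_gt0 alpha_gt1).
elim/ltn_ind: n => -[|[|[|j]]] IH.
- by rewrite expr0 mulr1 exprn_ege1 // ltW.
- by rewrite expr1 mulr1 expr2 ler_peMr // ltW.
- by rewrite mulr_natr mulr2n lerDl exprn_ge0.
- rewrite path_countSS natrD mulrDr alpha_exp_rec //; apply: lerD; apply: IH; lia.
Qed.

End PathGrowth.

Local Open Scope ring_scope.

Theorem mainTheorem18 (R : rcfType) (alpha : R)
    (halpha : alpha ^+ 3 - alpha ^+ 2 - 1 = 0) (h1 : 1 < alpha) (h2 : alpha < 2) :
  (forall (T : finType) (e : rel T), forest e ->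
     (num_induced_matchings e)%:R <= alpha ^+ #|T|) /\
  (exists c1 c2 : R, exists N : nat, 0 < c1 /\ 0 < c2 /\
     forall n : nat, (N <= n)%N ->
       c1 * alpha ^+ n <= (num_induced_matchings (@path_rel n))%:R /\
       (num_induced_matchings (@path_rel n))%:R <= c2 * alpha ^+ n).
Proof.
have alpha_root : alpha ^+ 3 = alpha ^+ 2 + 1.
  by apply/eqP; rewrite -subr_eq0 opprD addrA halpha.
have alpha2_gt0 : 0 < alpha ^+ 2 by rewrite exprn_gt0 // (alpha_gt0 h1).
split.
  move=> T e [[e_sym e_irr] acyclic]; rewrite num_induced_matchingsE -cardsT.
  exact: bounded_acyclic.
exists (alpha ^+ 2)^-1, 1, 0%N; split; first by rewrite invr_gt0.
split=> // n _; rewrite num_induced_matchings_path mul1r path_count_le //; split=> //.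
by rewrite ler_pdivrMl // path_count_ge.
Qed.
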